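(* Let $n\ge 8$, let $f:\{0,1\}^n\to\{0,1\}$ be fully sensitive at $0$, and let $p$ be its symmetrization polynomial. Then \[ \sup_{x\in[0,n]} |p^{(4)}(x)| \geq \frac{1}{6}. \] Moreover, the only polynomial for which this inequality is tight is \[ \tilde{p}(x) = -\frac{x^{4}}{144}+\frac{5 x^{3}}{36}-\frac{125 x^{2}}{144}+\frac{125 x}{72}. \]
   Context: $f$ is fully sensitive at $0$ if $f(0^n)=0$ and $f(e_i)=1$ for every $i=1,\dots,n$ ($e_i$ the $i$-th unit vector). Let $q$ be the unique multilinear real polynomial agreeing with $f$ on $\{0,1\}^n$, of degree $d(f)$. The symmetrization polynomial of $f$ is the univariate real polynomial $p$ of degree at most $d(f)$ with $p(x_1+\dots+x_n)=\frac{1}{n!}\sum_{\pi\in S_n} q(\pi(x))$ for all $x\in\{0,1\}^n$ ($\pi(x)$ permutes coordinates); equivalently $p(k)$, $k=0,\dots,n$, is the fraction of inputs of Hamming weight $k$ on which $f=1$. $p^{(4)}$ is the fourth derivative. *)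

From HB Require Import structures.
From mathcomp Require Import all_boot all_order all_algebra.
From mathcomp Require Import all_classical all_reals.
Set Implicit Arguments. Unset Strict Implicit. Unset Printing Implicit Defensive.
Import Order.TTheory GRing.Theory Num.Theory.
Local Open Scope ring_scope.

Definition cube (n : nat) := {ffun 'I_n -> bool}.

Definition hweight n (x : cube n) : nat := #|[set i | x i]|.

Definition zero_in (n : nat) : cube n := [ffun _ => false].
Definition unit_in n (i : 'I_n) : cube n := [ffun j => j == i].

Definition fully_sensitive_at0 n (f : cube n -> bool) : Prop :=
  f (zero_in n) = false /\ forall i : 'I_n, f (unit_in i) = true.

Definition ind n (S : {set 'I_n}) : cube n := [ffun i => i \in S].

(* Coefficient of the monomial prod_{i in S} x_i in the unique multilinear
   real polynomial q agreeing with f on {0,1}^n (Moebius inversion). *)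
Definition mlcoef (R : nzRingType) n (f : cube n -> bool) (S : {set 'I_n}) : R :=
  \sum_(T : {set 'I_n} | T \subset S)
     (-1) ^+ (#|S| - #|T|) * (f (ind T))%:R.

Definition mldeg (R : nzRingType) n (f : cube n -> bool) : nat :=
  \max_(S : {set 'I_n} | mlcoef R f S != 0) #|S|.

Definition sym_frac (R : realType) n (f : cube n -> bool) (k : nat) : R :=
  #|[set x : cube n | (hweight x == k) && f x]|%:R
  / #|[set x : cube n | hweight x == k]|%:R.

(* p is the symmetrization polynomial of f: degree <= d(f) and
   p(k) = fraction of weight-k inputs with f = 1, for k = 0..n
   (these conditions determine p uniquely since d(f) <= n). *)
Definition is_symmetrization (R : realType) n (f : cube n -> bool)
    (p : {poly R}) : Prop :=
  (size p <= (mldeg R f).+1)%N /\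
  forall k : nat, (k <= n)%N -> p.[k%:R] = sym_frac R f k.

Definition ptilde (R : realType) : {poly R} :=
  - (1 / 144) *: 'X^4 + (5 / 36) *: 'X^3 - (125 / 144) *: 'X^2
  + (125 / 72) *: 'X.

Definition sup4 (R : realType) (n : nat) (p : {poly R}) : R :=
  sup [set `|(p^`(4)).[x]| | x in [set x : R | 0 <= x <= n%:R]]%classic.

(* Full sensitivity gives p(0) = 0 and p(1) = 1, and p(k) lies in [0, 1] for
   every integer 0 <= k <= n.  By the mean value theorem for divided differences there is a
   ξ in [0, 8] with p''''(ξ) / 4! equal to the fourth divided difference of p
   on the nodes 0, 1, 2, 5, 8, namely
     -1/28 + p(2)/36 - p(5)/180 + p(8)/1008  <=  -1/144,
   so |p''''(ξ)| >= 1/6.  Equality forces p(2) = p(8) = 1 and p(5) = 0, the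
   values of p̃ at these nodes, so p - p̃ vanishes at all five nodes while
   (p - p̃)'''' = p'''' + 1/6 >= 0 on [0, n].  Rolle's theorem then gives two
   zeros of (p - p̃)''', which is nondecreasing between them, hence zero; and a
   polynomial of degree at most 2 with five roots is zero. *)

From HB Require Import structures.
From mathcomp Require Import all_boot all_order all_algebra.
From mathcomp Require Import all_classical all_reals.
From mathcomp Require Import polyrcf ring lra.
From mathcomp Require polyorder.

Set Implicit Arguments.
Unset Strict Implicit.
Unset Printing Implicit Defensive.

Import Order.TTheory GRing.Theory Num.Theory.
Local Open Scope ring_scope.

Lemma derivn_size_leS (R : nzRingType) (p : {poly R}) k :
  (size p <= k.+1)%N -> p^`(k) = (p`_k *+ k`!)%:P.
Proof.
move=> size_p; apply/polyP => -[|i]; rewrite coef_derivn coefC /=.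
  by rewrite addn0 ffactnn.
by rewrite nth_default ?mul0rn // (leq_trans size_p) // addnS ltnS leq_addr.
Qed.

Section Interpolation.
Variable F : fieldType.
Implicit Types (q : {poly F}) (s : seq F) (x y : F).

Definition nodal s : {poly F} := \prod_(c <- s) ('X - c%:P).
(* [node_weight s x] is [w'(x)] for [w = nodal s] and a simple node [x]. *)
Definition node_weight s x : F := \prod_(c <- rem x s) (x - c).
Definition divdiff s q : F := \sum_(x <- s) q.[x] / node_weight s x.
Definition interp s q : {poly F} :=
  \sum_(x <- s) (q.[x] / node_weight s x) *: nodal (rem x s).

Lemma horner_nodal s y : (nodal s).[y] = \prod_(c <- s) (y - c).
Proof. by rewrite /nodal horner_prod; apply: eq_bigr => c _; rewrite hornerXsubC. Qed.

Lemma horner_interp s q y : uniq s -> y \in s -> (interp s q).[y] = q.[y].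
Proof.
move=> uniq_s y_s; rewrite /interp horner_sum (bigD1_seq y) //= big1_seq => [|x].
  have w_neq0 : node_weight s y != 0.
    rewrite prodf_seq_neq0; apply/allP => c; rewrite mem_rem_uniq // inE.
    by case/andP=> c_neq_y _; rewrite subr_eq0 eq_sym.
  by rewrite addr0 hornerZ horner_nodal divfK.
case/andP=> x_neq_y x_s; rewrite hornerZ; apply/eqP; rewrite mulf_eq0; apply/orP; right.
by rewrite -rootE root_prod_XsubC mem_rem_uniq // inE eq_sym x_neq_y.
Qed.

Lemma derivn_nodal s : (nodal s)^`(size s) = ((size s)`!)%:R%:P.
Proof.
have size_nodal : size (nodal s) = (size s).+1 by rewrite size_prod_XsubC.
rewrite derivn_size_leS ?size_nodal //.
have := monic_prod_XsubC s predT id; rewrite monicE lead_coefE size_nodal => /eqP.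
by rewrite /nodal => ->.
Qed.

Lemma derivn_interp s q :
  (interp s q)^`((size s).-1) = (divdiff s q *+ ((size s).-1)`!)%:P.
Proof.
rewrite /interp /divdiff linear_sum -mulr_natr mulr_suml rmorph_sum /=.
apply: eq_big_seq => x x_s.
by rewrite linearZ /= -(size_rem x_s) derivn_nodal -scale_polyC.
Qed.

End Interpolation.

Section RealRoots.
Variable R : realType.
Implicit Types (g q r : {poly R}) (a b x : R) (s : seq R).

Lemma deriv_roots_sorted g x s :
  sorted <%R (x :: s) -> all (root g) (x :: s) ->
  exists t, [/\ sorted <%R t, all (root g^`()) t, size t = size s
              & {subset t <= `]x, last x s[}].
Proof.
elim: s x => [|y s IH] x /=; first by exists [::].
case/andP=> lt_xy sorted_ys /andP[gx roots_ys].
have /andP[gy _] := roots_ys.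
have [t [sorted_t roots_t size_t sub_t]] := IH y sorted_ys roots_ys.
have [c c_xy g'c] := poly_rolle lt_xy (etrans (eqP gx) (esym (eqP gy))).
have le_y_last : y <= last y s.
  have := mem_last y s; rewrite inE => /predU1P[-> //|].
  by move/(allP (order_path_min lt_trans sorted_ys))/ltW.
exists (c :: t); split => /=.
- rewrite path_sortedE ?sorted_t ?andbT; last exact: lt_trans.
  apply/allP => z /sub_t; rewrite !in_itv /= => /andP[yz _].
  by rewrite (lt_trans _ yz) // (itvP c_xy).
- by rewrite rootE g'c eqxx.
- by rewrite size_t.
- move=> z; rewrite inE => /predU1P[->|/sub_t]; rewrite !in_itv /=.
    by rewrite (itvP c_xy) (lt_le_trans _ le_y_last) ?(itvP c_xy).
  by case/andP=> yz ->; rewrite (lt_trans lt_xy).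
Qed.

Lemma derivn_roots_sorted g k s a b :
  sorted <%R s -> all (root g) s -> {subset s <= `[a, b]} ->
  exists t, [/\ sorted <%R t, all (root g^`(k)) t, size t = (size s - k)%N
              & {subset t <= `[a, b]}].
Proof.
move=> sorted_s roots_s sub_s; elim: k => [|k [[|x t] [sorted_t roots_t size_t sub_t]]].
- by exists s; rewrite derivn0 subn0.
- by exists [::]; rewrite subnS -size_t.
have [u [sorted_u roots_u size_u sub_u]] := deriv_roots_sorted sorted_t roots_t.
exists u; split => //; first by rewrite size_u subnS -size_t.
have := sub_t x (mem_head _ _); rewrite in_itv /= => /andP[ax _].
have := sub_t _ (mem_last x t); rewrite in_itv /= => /andP[_ lb].
move=> z /sub_u; rewrite !in_itv /= => /andP[xz zl].
by rewrite (le_trans ax (ltW xz)) (le_trans (ltW zl) lb).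
Qed.

Lemma poly_itv_eq0 r a b : a < b -> {in `[a, b], forall x, root r x} -> r = 0.
Proof.
move=> lt_ab r_itv; pose F (k : nat) := a + (b - a) / k.+1%:R.
have ba_neq0 : b - a != 0 by rewrite subr_eq0 gt_eqF.
apply: (@roots_geq_poly_eq0 _ _ (map F (iota 0 (size r)))); last first.
- by rewrite size_map size_iota.
- rewrite map_inj_uniq ?iota_uniq // => k l /addrI /(mulfI ba_neq0).
  by move/invr_inj/eqP; rewrite eqr_nat => /eqP [].
apply/allP => _ /mapP[k _ ->]; apply: r_itv; rewrite in_itv /= /F.
have k_gt0 : 0 < k.+1%:R :> R by rewrite ltr0n.
have k_ge1 : 1 <= k.+1%:R :> R by rewrite ler1n.
have : 0 < (b - a) / k.+1%:R <= b - a.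
  by rewrite divr_gt0 ?subr_gt0 // ler_pdivrMr // ler_peMr // subr_ge0 ltW.
by case/andP=> d_gt0 d_le; rewrite lerDl ltW //= -lerBrDl.
Qed.

Lemma poly_eq0_deriv_ge0 r a b : a < b -> {in `[a, b], forall x, 0 <= r^`().[x]} ->
  root r a -> root r b -> r = 0.
Proof.
move=> lt_ab r'_ge0 /eqP ra /eqP rb; apply: (poly_itv_eq0 lt_ab) => x x_ab.
have r_homo := ler_hornerW (fun y y_ab => r'_ge0 y (subset_itv_oo_cc y_ab)).
have a_ab : a \in `[a, b] by rewrite in_itv /= lexx ltW.
have b_ab : b \in `[a, b] by rewrite in_itv /= lexx ltW.
have := x_ab; rewrite in_itv /= => /andP[ax xb].
by rewrite rootE eq_le -{1}rb -ra !r_homo.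
Qed.

Lemma derivn_ge0_roots_poly_eq0 q k s a b :
  sorted <%R s -> all (root q) s -> {subset s <= `[a, b]} -> size s = k.+2 ->
  {in `[a, b], forall x, 0 <= (q^`(k.+1)).[x]} -> q = 0.
Proof.
move=> sorted_s roots_s sub_s size_s qk1_ge0.
have [t [sorted_t roots_t size_t sub_t]] := derivn_roots_sorted k sorted_s roots_s sub_s.
have {size_t} : size t = 2 by rewrite size_t size_s -addn2 addKn.
case: t sorted_t roots_t sub_t => [|d1 [|d2 []]] //= /andP[lt_d12 _] /and3P[qd1 qd2 _] sub_t _.
have sub_d : {subset `[d1, d2] <= `[a, b]}.
  have := sub_t d1 (mem_head _ _); rewrite in_itv /= => /andP[ad1 _].
  have := sub_t d2; rewrite in_itv /= !inE eqxx orbT => /(_ isT)/andP[_ d2b].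
  move=> x; rewrite !in_itv /= => /andP[d1x xd2].
  by rewrite (le_trans ad1 d1x) (le_trans xd2 d2b).
have qk_eq0 : q^`(k) = 0.
  apply: (poly_eq0_deriv_ge0 lt_d12) => // x /sub_d; rewrite -derivnS; exact: qk1_ge0.
apply: (roots_geq_poly_eq0 roots_s (lt_sorted_uniq sorted_s)).
have := polyorder.derivn_poly0 q k; rewrite qk_eq0 eqxx => size_q.
by rewrite size_s (@leq_trans k) // -addn2 leq_addr.
Qed.

Theorem divdiff_mean_value q s a b :
  sorted <%R s -> s != [::] -> {subset s <= `[a, b]} ->
  exists2 xi, xi \in `[a, b] & (q^`((size s).-1)).[xi] = divdiff s q *+ ((size s).-1)`!.
Proof.
move=> sorted_s s_neq0 sub_s.
have roots_s : all (root (q - interp s q)) s.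
  apply/allP => x x_s.
  by rewrite rootE hornerD hornerN horner_interp ?lt_sorted_uniq ?subrr.
have [t [_ roots_t size_t sub_t]] := derivn_roots_sorted (size s).-1 sorted_s roots_s sub_s.
have s_gt0 : (0 < size s)%N by rewrite lt0n size_eq0.
have {size_t} : size t = 1%N by rewrite size_t -(prednK s_gt0) /= subSnn.
case: t roots_t sub_t => [|xi []] //= /andP[root_xi _] sub_t _.
exists xi; first by rewrite sub_t ?mem_head.
by move: root_xi; rewrite derivnB derivn_interp rootE !hornerE subr_eq0 => /eqP.
Qed.

End RealRoots.

Lemma horner_norm_bounded (R : realType) (r : {poly R}) (N : R) :
  exists M, forall x, `|x| <= N -> `|r.[x]| <= M.
Proof.
exists (\sum_(i < size r) `|r`_i| * N ^+ i) => x le_xN.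
rewrite horner_coef; apply: le_trans (ler_norm_sum _ _ _) _.
apply: ler_sum => i _; rewrite normrM normrX ler_wpM2l //.
by rewrite lerXn2r ?nnegrE ?(le_trans _ le_xN).
Qed.

Lemma le_sup4 (R : realType) n (p : {poly R}) x :
  0 <= x <= n%:R -> `|(p^`(4)).[x]| <= sup4 n p.
Proof.
move=> x_in; apply: ub_le_sup; last by exists x.
have [M bounded] := horner_norm_bounded (p^`(4)) n%:R.
exists M => _ [y /andP[y_ge0 y_le] <-]; apply: bounded.
by rewrite ger0_norm.
Qed.

Section SymFrac.
Variables (R : realType) (n : nat) (f : cube n -> bool).

Lemma sym_frac_ge0 k : 0 <= sym_frac R f k.
Proof. by rewrite divr_ge0. Qed.

Lemma sym_frac_le1 k : sym_frac R f k <= 1.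
Proof.
rewrite /sym_frac; set A := [set x | _ && _]; set B := [set x | _].
have [->|B_gt0] := posnP #|B|; first by rewrite invr0 mulr0 ler01.
rewrite ler_pdivrMr ?ltr0n // mul1r ler_nat subset_leq_card //.
by apply/fintype.subsetP => x; rewrite !inE => /andP[].
Qed.

Lemma hweight_eq0 (x : cube n) : hweight x = 0%N -> x = zero_in n.
Proof.
move/eqP; rewrite cards_eq0 => /eqP x0; apply/ffunP => i; rewrite ffunE.
apply/negbTE/negP => xi.
have : i \in [set i | x i] by rewrite inE.
by rewrite x0 inE.
Qed.

Lemma hweight_eq1 (x : cube n) : hweight x = 1%N -> exists i, x = unit_in i.
Proof.
move/eqP/cards1P => [i xi]; exists i; apply/ffunP => j.
by rewrite ffunE; have := congr1 (fun A : {set 'I_n} => j \in A) xi; rewrite /= !inE.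
Qed.

Lemma hweight_unit (i : 'I_n) : hweight (unit_in i) = 1%N.
Proof.
rewrite /hweight (_ : [set j | unit_in i j] = [set i]) ?cards1 //.
by apply/setP => j; rewrite !inE ffunE.
Qed.

Lemma sym_frac0 : f (zero_in n) = false -> sym_frac R f 0 = 0.
Proof.
move=> f0; rewrite /sym_frac (_ : [set x | _ && _] = finset.set0) ?cards0 ?mul0r //.
by apply/setP => x; rewrite !inE; apply/negP => /andP[/eqP/hweight_eq0 ->]; rewrite f0.
Qed.

Lemma sym_frac1 : (0 < n)%N -> (forall i, f (unit_in i)) -> sym_frac R f 1 = 1.
Proof.
move=> n_gt0 f1; rewrite /sym_frac (_ : [set x | _ && _] = [set x | hweight x == 1%N]).
  apply: divff; rewrite pnatr_eq0 -lt0n card_gt0; apply/set0Pn.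
  by exists (unit_in (Ordinal n_gt0)); rewrite inE hweight_unit.
apply/setP => x; rewrite !inE; case: eqP => //= /hweight_eq1 [i ->]; exact: f1.
Qed.

End SymFrac.

Section ExtremalPolynomial.
Variable R : realType.

Definition nodes01258 : seq R := [seq k%:R | k <- [:: 0; 1; 2; 5; 8]%N].

Lemma divdiff_nodes01258 (q : {poly R}) : divdiff nodes01258 q =
  q.[0] / 80 - q.[1] / 28 + q.[2] / 36 - q.[5] / 180 + q.[8] / 1008.
Proof.
rewrite /divdiff /node_weight /nodes01258 /= !big_cons big_nil !eqr_nat /= !big_cons !big_nil.
by field.
Qed.

Lemma sorted_nodes01258 : sorted <%R nodes01258.
Proof. by rewrite /= !ltr_nat. Qed.

Lemma nodes01258_sub n : (8 <= n)%N -> {subset nodes01258 <= `[0, n%:R]}.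
Proof.
move=> n_ge8 _ /mapP[k k_in ->]; rewrite in_itv /= ler0n ler_nat (leq_trans _ n_ge8) //.
by move: k k_in; apply/allP.
Qed.

Lemma horner_ptilde x : (ptilde R).[x] =
  - (1 / 144) * x ^+ 4 + 5 / 36 * x ^+ 3 - 125 / 144 * x ^+ 2 + 125 / 72 * x.
Proof. by rewrite /ptilde !hornerE. Qed.

Lemma derivn4_ptilde : (ptilde R)^`(4) = (- (1 / 6))%:P.
Proof.
rewrite /ptilde !(derivnD, derivnB, derivnN, derivnZ) !derivnXn.
rewrite (@derivn_poly0 _ 'X) ?size_polyX // ffactnn !ffact_small //.
rewrite !mulr0n !scaler0 !subr0 !addr0 -polyCMn scale_polyC.
by congr (_%:P); rewrite (_ : 4`! = 24)%N //; field.
Qed.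

End ExtremalPolynomial.

Theorem theorem10 (R : realType) (n : nat) (f : cube n -> bool) (p : {poly R}) :
  (8 <= n)%N -> fully_sensitive_at0 f -> is_symmetrization f p ->
  1 / 6 <= sup4 n p /\ (sup4 n p = 1 / 6 -> p = ptilde R).
Proof.
move=> n_ge8 [f0 f1] [_ p_sym].
have p_frac k : (k <= n)%N -> 0 <= p.[k%:R] <= 1.
  by move=> k_le; rewrite p_sym // sym_frac_ge0 sym_frac_le1.
have p0 : p.[0] = 0 by rewrite (p_sym 0%N) ?sym_frac0.
have le8n k : (k <= 8)%N -> (k <= n)%N by move/leq_trans; apply.
have n_gt0 : (0 < n)%N by exact: le8n.
have p1 : p.[1] = 1 by rewrite (p_sym 1%N) // sym_frac1.
have /andP[p2_ge0 p2_le1] := p_frac 2%N (le8n 2%N isT).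
have /andP[p5_ge0 p5_le1] := p_frac 5%N (le8n 5%N isT).
have /andP[p8_ge0 p8_le1] := p_frac 8%N n_ge8.
have sub_nodes := nodes01258_sub (R := R) n_ge8.
have [xi xi_in p4_xi] := divdiff_mean_value p (sorted_nodes01258 R) isT sub_nodes.
have {p4_xi} : (p^`(4)).[xi] = divdiff (nodes01258 R) p *+ 24 := p4_xi.
rewrite divdiff_nodes01258 -mulr_natr => p4_xi.
have sup_xi := le_sup4 p (x := xi) xi_in.
have p4_xi_le : (p^`(4)).[xi] <= - (1 / 6) by rewrite p4_xi p0 p1; lra.
split; first by apply: le_trans sup_xi; rewrite ler0_norm; lra.
move=> sup_eq; move: sup_xi; rewrite sup_eq ler_norml => /andP[p4_xi_ge _].
have [p2 p5 p8] : [/\ p.[2] = 1, p.[5] = 0 & p.[8] = 1].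
  by move: p4_xi_le p4_xi_ge; rewrite p4_xi p0 p1 => *; split; lra.
apply/eqP; rewrite -subr_eq0; apply/eqP.
apply: (derivn_ge0_roots_poly_eq0 (k := 3) (sorted_nodes01258 R) _ sub_nodes) => //.
  rewrite /= andbT !rootE !hornerD !hornerN !horner_ptilde p0 p1 p2 p5 p8.
  by apply/and5P; split; apply/eqP; field.
move=> x x_in; have := le_sup4 p (x := x) x_in.
by rewrite derivnB derivn4_ptilde sup_eq ler_norml !hornerE => /andP[]; lra.
Qed.
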